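(* Let $r\ge1$, let $\mathbf s=(s_1,\dots,s_r)$ be a composition with $s_1>1$, and let $\xi=(\xi_1,\dots,\xi_r)\in\mathbb{C}^r$ and $\mathbf t=(t_1,\dots,t_r)$ satisfy condition (E). Then $\mathrm{Di}(\mathbf F_{\xi,\mathbf t};\mathbf s)=\alpha_0^1\big(x_0^{s_1-1}x_{1,\xi,\bar t_1}\,x_0^{s_2-1}x_{2,\xi,\bar t_2}\cdots x_0^{s_r-1}x_{r,\xi,\bar t_r}\big)$.
   Context: Colored Hurwitz polyzetas. For a composition $\mathbf s=(s_1,\dots,s_r)$ (positive integers), $\xi=(\xi_1,\dots,\xi_r)\in\mathbb{C}^r$ and real $\mathbf t=(t_1,\dots,t_r)$, set $\mathrm{Di}(\mathbf F_{\xi,\mathbf t};\mathbf s)=\sum_{n_1>\cdots>n_r>0}\frac{\xi_1^{n_1}\cdots\xi_r^{n_r}}{(n_1-t_1)^{s_1}\cdots(n_r-t_r)^{s_r}}$. Condition (E): for all $i$, $|\xi_1\xi_2\cdots\xi_i|\le 1$ and $t_i\in\,]-\infty,1[$. Differences of parameters. $\bar t_i=t_i-t_{i+1}$ for $1\le i<r$, and $\bar t_r=t_r$; thus $t_i=\bar t_i+\cdots+\bar t_r$. Letters and forms. The alphabet consists of $x_0$ and letters $x_{i,\xi,\tau}$ with $i\ge1$, $\xi$ a sequence of complex numbers and $\tau$ a real parameter. The associated differential forms are $\omega_0(z)=\frac{dz}{z}$ and $\omega_{i,\xi,\tau}(z)=\frac{\xi_1\cdots\xi_i}{1-\xi_1\cdots\xi_i\,z}\,\frac{dz}{z^{\tau}}$.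 Iterated integrals. For a word $w=y_1y_2\cdots y_k$ with associated forms $\omega^{(1)},\dots,\omega^{(k)}$, the Chen iterated integral along $[0,z]$ is defined recursively by $\alpha_0^z(1)=1$ and $\alpha_0^z(y_1y_2\cdots y_k)=\int_0^z\omega^{(1)}(z_1)\,\alpha_0^{z_1}(y_2\cdots y_k)$. *)

From Stdlib Require Import Reals Lra List.
Open Scope R_scope.

Definition Cx : Type := (R * R)%type.
Definition Cre (z : Cx) : R := fst z.
Definition Cim (z : Cx) : R := snd z.
Definition RtoC (x : R) : Cx := (x, 0).
Definition C0 : Cx := (0, 0).
Definition C1 : Cx := (1, 0).
Definition Cadd (z w : Cx) : Cx := (fst z + fst w, snd z + snd w).
Definition Copp (z : Cx) : Cx := (- fst z, - snd z).
Definition Csub (z w : Cx) : Cx := Cadd z (Copp w).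
Definition Cmul (z w : Cx) : Cx :=
  (fst z * fst w - snd z * snd w, fst z * snd w + snd z * fst w).
Definition Cscale (x : R) (z : Cx) : Cx := (x * fst z, x * snd z).
Definition Cinv (z : Cx) : Cx :=
  let d := fst z * fst z + snd z * snd z in (fst z / d, - snd z / d).
Definition Cdiv (z w : Cx) : Cx := Cmul z (Cinv w).
Definition Cmod (z : Cx) : R := sqrt (fst z * fst z + snd z * snd z).
Fixpoint Cpow (z : Cx) (n : nat) : Cx :=
  match n with O => C1 | S m => Cmul z (Cpow z m) end.

Fixpoint Cprod1 (xi : nat -> Cx) (i : nat) : Cx :=
  match i with O => C1 | S k => Cmul (Cprod1 xi k) (xi (S k)) end.

(** sum_{n=1}^{m-1} f n *)
Fixpoint Csum_lt (f : nat -> Cx) (m : nat) : Cx :=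
  match m with
  | O => C0
  | S k => match k with O => C0 | _ => Cadd (Csum_lt f k) (f k) end
  end.

Definition Cseq_cv (u : nat -> Cx) (L : Cx) : Prop :=
  forall eps : R, eps > 0 ->
    exists N : nat, forall n : nat, (n >= N)%nat -> Cmod (Csub (u n) L) < eps.

(** Indices are 1-based: s, xi, t are functions on nat, only 1..r matter.
    [Di_level d k m] = sum over m > n_k > n_{k+1} > ... > n_{k+d-1} > 0 of
    prod_{j} xi_j^{n_j} / (n_j - t_j)^{s_j}. *)
Definition Di_term (s : nat -> nat) (xi : nat -> Cx) (t : nat -> R)
  (k n : nat) : Cx :=
  Cscale (/ ((INR n - t k) ^ (s k))) (Cpow (xi k) n).

Fixpoint Di_level (s : nat -> nat) (xi : nat -> Cx) (t : nat -> R)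
  (d k m : nat) : Cx :=
  match d with
  | O => C1
  | S d' => Csum_lt (fun n => Cmul (Di_term s xi t k n)
                                   (Di_level s xi t d' (S k) n)) m
  end.

(** Partial sum over N >= n_1 > ... > n_r > 0. *)
Definition Di_partial (r : nat) (s : nat -> nat) (xi : nat -> Cx)
  (t : nat -> R) (N : nat) : Cx :=
  Di_level s xi t r 1 (S N).

(** Di(F_{xi,t}; s) = L : the multiple series converges (as N -> oo) to L. *)
Definition Di_is (r : nat) (s : nat -> nat) (xi : nat -> Cx) (t : nat -> R)
  (L : Cx) : Prop :=
  Cseq_cv (Di_partial r s xi t) L.

Definition condE (r : nat) (xi : nat -> Cx) (t : nat -> R) : Prop :=
  forall i : nat, (1 <= i <= r)%nat -> Cmod (Cprod1 xi i) <= 1 /\ t i < 1.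

Definition tbar (r : nat) (t : nat -> R) (i : nat) : R :=
  if Nat.ltb i r then t i - t (S i) else t r.

Inductive letter : Type :=
| x0 : letter
| xl : nat -> (nat -> Cx) -> R -> letter.

(** Coefficient of the form attached to a letter at a real point u in (0,1):
    omega_0(u) = du/u ;
    omega_{i,xi,tau}(u) = xi_1..xi_i / (1 - xi_1..xi_i u) du / u^tau. *)
Definition omega (y : letter) (u : R) : Cx :=
  match y with
  | x0 => RtoC (/ u)
  | xl i xi tau =>
      let P := Cprod1 xi i in
      Cscale (Rpower u (- tau)) (Cdiv P (Csub C1 (Cscale u P)))
  end.

Definition CRint (g : R -> Cx) (a b : R) (v : Cx) : Prop :=
  (exists pr : Riemann_integrable (fun u => fst (g u)) a b,
      RiemannInt pr = fst v) /\
  (exists pr : Riemann_integrable (fun u => snd (g u)) a b,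
      RiemannInt pr = snd v).

Definition CImpInt (g : R -> Cx) (z : R) (v : Cx) : Prop :=
  forall eps : R, eps > 0 -> exists delta : R, delta > 0 /\
    forall a b : R, 0 < a < delta -> z - delta < b < z -> a < b ->
      exists w : Cx, CRint g a b w /\ Cmod (Csub w v) < eps.

(** [iter_fun w F]: F(z) = alpha_0^z(w) for all z in ]0,1[ (Chen iterated
    integral along [0,z], defined recursively, each integral existing). *)
Fixpoint iter_fun (w : list letter) (F : R -> Cx) : Prop :=
  match w with
  | nil => forall z, 0 < z < 1 -> F z = C1
  | y :: w' => exists G : R -> Cx, iter_fun w' G /\
      forall z, 0 < z < 1 -> CImpInt (fun u => Cmul (omega y u) (G u)) z (F z)
  end.

Definition alpha01 (w : list letter) (L : Cx) : Prop :=
  match w with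
  | nil => L = C1
  | y :: w' => exists G : R -> Cx, iter_fun w' G /\
      CImpInt (fun u => Cmul (omega y u) (G u)) 1 L
  end.

Fixpoint word_from (r : nat) (s : nat -> nat) (xi : nat -> Cx) (t : nat -> R)
  (i d : nat) : list letter :=
  match d with
  | O => nil
  | S d' => repeat x0 (s i - 1) ++ (xl i xi (tbar r t i) :: nil)
            ++ word_from r s xi t (S i) d'
  end.

Definition Di_word (r : nat) (s : nat -> nat) (xi : nat -> Cx) (t : nat -> R)
  : list letter := word_from r s xi t 1 r.

From Pilot Require Import Defs.
From Stdlib Require Import Reals List Lra Lia Psatz.
From Coquelicot Require Import Coquelicot.
Import Pilot.Defs.
Open Scope R_scope.

(** Write [P_k = xi_1 ... xi_k].  For [1 <= k <= r] and [j] we use the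
    generating series of the tails of the polyzeta
      [gen k j u = u^(1-t_k) * sum_n coef k j n * u^n],
      [coef k j n = P_k^(n+1) / (n+1-t_k)^j * Di_level (r-k) (k+1) (n+1)],
    where [Di_level (r-k) (k+1) m] is the truncated polyzeta over the indices
    [k+1..r] with [n_(k+1) < m].  Raising [j] divides the coefficients by
    [n+1-t_k], so [gen k (j+1)] is the integral of [du/u * gen k j]; and the
    recursion [coef k 0 (n+1) = P_k (coef k 0 n + coef (k+1) s_(k+1) n)] makes
    [gen k 1] the integral of [omega_(k,xi,tbar_k) * gen (k+1) s_(k+1)].  By
    induction along the word, [gen k j] is the iterated integral of
    [x0^(j-1) x_k x0^(s_(k+1)-1) ... x_r] on ]0,1[.  The polyzeta is
    [sum_n coef 1 s_1 n], the limit of [gen 1 s_1] at 1: condition (E) gives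
    [|P_k|^m |Di_level (r-k) (k+1) m| = O(sqrt m)], and [s_1 >= 2] then makes
    the coefficients [O(n^(-3/2))], absolutely summable (Abel's theorem). *)

Lemma Cmod_Coquelicot (z : Cx) : Cmod z = Complex.Cmod z.
Proof. unfold Cmod, Complex.Cmod. f_equal. ring. Qed.

Lemma Cmod_nonneg (z : Cx) : 0 <= Cmod z.
Proof. rewrite Cmod_Coquelicot. apply Cmod_ge_0. Qed.

Lemma Cmod_Cmul (a b : Cx) : Cmod (Cmul a b) = Cmod a * Cmod b.
Proof. rewrite !Cmod_Coquelicot. exact (Cmod_mult a b). Qed.

Lemma Cmod_Cadd_le (a b : Cx) : Cmod (Cadd a b) <= Cmod a + Cmod b.
Proof. rewrite !Cmod_Coquelicot. exact (Cmod_triangle a b). Qed.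

Lemma Cmod_C1 : Cmod C1 = 1.
Proof. rewrite Cmod_Coquelicot. exact Cmod_1. Qed.

Lemma Cmod_C0 : Cmod C0 = 0.
Proof. unfold Cmod, C0; simpl. rewrite Rmult_0_l, Rplus_0_l. apply sqrt_0. Qed.

Lemma Cmod_Cscale (x : R) (z : Cx) : Cmod (Cscale x z) = Rabs x * Cmod z.
Proof.
  unfold Cmod, Cscale; simpl.
  rewrite <- sqrt_Rsqr_abs, <- sqrt_mult_alt by apply Rle_0_sqr.
  f_equal. unfold Rsqr. ring.
Qed.

Lemma Cmod_Cpow (z : Cx) (n : nat) : Cmod (Cpow z n) = Cmod z ^ n.
Proof.
  induction n as [|n IH]; simpl; [apply Cmod_C1|].
  rewrite Cmod_Cmul, IH. reflexivity.
Qed.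

Lemma Rabs_fst_le_Cmod (z : Cx) : Rabs (fst z) <= Cmod z.
Proof.
  unfold Cmod. rewrite <- sqrt_Rsqr_abs. apply sqrt_le_1_alt.
  pose proof (Rle_0_sqr (snd z)). unfold Rsqr in *. lra.
Qed.

Lemma Rabs_snd_le_Cmod (z : Cx) : Rabs (snd z) <= Cmod z.
Proof.
  unfold Cmod. rewrite <- sqrt_Rsqr_abs. apply sqrt_le_1_alt.
  pose proof (Rle_0_sqr (fst z)). unfold Rsqr in *. lra.
Qed.

Lemma Cmod_le_Rabs_sum (z : Cx) : Cmod z <= Rabs (fst z) + Rabs (snd z).
Proof.
  unfold Cmod. destruct z as [x y]; simpl.
  pose proof (Rabs_pos x). pose proof (Rabs_pos y).
  rewrite <- (sqrt_Rsqr (Rabs x + Rabs y)) by lra.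
  apply sqrt_le_1_alt. unfold Rsqr.
  assert (x * x = Rabs x * Rabs x) by (rewrite <- Rabs_mult, Rabs_pos_eq; nra).
  assert (y * y = Rabs y * Rabs y) by (rewrite <- Rabs_mult, Rabs_pos_eq; nra).
  nra.
Qed.

Lemma Cscale_Cmult (x : R) (z : Cx) : Cscale x z = Complex.Cmult (Complex.RtoC x) z.
Proof. destruct z as [a b]. unfold Cscale, Complex.Cmult, Complex.RtoC; simpl. f_equal; ring. Qed.

Lemma Cdiv_Cdiv (a b : Cx) : Cdiv a b = Complex.Cdiv a b.
Proof.
  destruct a as [a1 a2], b as [b1 b2].
  unfold Cdiv, Cinv, Complex.Cdiv, Complex.Cinv, Cmul, Complex.Cmult; simpl.
  rewrite !Rmult_1_r. reflexivity.
Qed.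

(** Restate goals over Coquelicot's field [C], so that [ring] and [field]
    apply: the operations of [Defs] are convertible to Coquelicot's. *)
Ltac to_Coquelicot :=
  rewrite ?Cscale_Cmult, ?Cdiv_Cdiv in *;
  change Cx with Complex.C in *; change Cmul with Complex.Cmult in *;
  change Cadd with Complex.Cplus in *; change Csub with Complex.Cminus in *;
  change C1 with (Complex.RtoC 1) in *; change C0 with (Complex.RtoC 0) in *.

Lemma CV_radius_le_of_Rabs (a b : nat -> R) :
  (forall n, Rabs (a n) <= Rabs (b n)) -> Rbar_le (CV_radius b) (CV_radius a).
Proof.
  intros H.
  refine (is_lub_Rbar_subset _ _ _ _ _ (CV_radius_bounded a) (CV_radius_bounded b)).
  intros x [M HM]. exists M. intros n.
  eapply Rle_trans; [|apply (HM n)].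
  rewrite !Rabs_mult. apply Rmult_le_compat_r; [apply Rabs_pos|apply H].
Qed.

(** Coefficients growing at most linearly give radius at least 1: compare
    with [(n+1)], the derivative of the geometric series. *)
Lemma CV_radius_linear_growth (a : nat -> R) (M : R) :
  (forall n, Rabs (a n) <= M * INR (S n)) -> Rbar_le 1 (CV_radius a).
Proof.
  intros H.
  assert (Hgeo : CV_radius (fun _ => 1) = 1).
  { rewrite (CV_radius_finite_DAlembert _ 1); [f_equal; apply Rinv_1|intros; lra|lra|].
    apply is_lim_seq_ext with (fun _ => 1); [|apply is_lim_seq_const].
    intros. unfold Rdiv. rewrite Rinv_1, Rmult_1_l, Rabs_R1. reflexivity. }
  assert (Hlin : CV_radius (fun n => (Rabs M + 1) * INR (S n)) = 1).
  { rewrite (CV_radius_ext _ (PS_scal (Rabs M + 1) (PS_derive (fun _ => 1)))).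
    - rewrite CV_radius_scal, CV_radius_derive; [exact Hgeo|].
      pose proof (Rabs_pos M); lra.
    - intros n. unfold PS_scal, PS_derive, scal; simpl. unfold mult; simpl. ring. }
  rewrite <- Hlin. apply CV_radius_le_of_Rabs.
  intros n. eapply Rle_trans; [apply H|].
  pose proof (pos_INR (S n)). pose proof (Rle_abs M). pose proof (Rabs_pos M).
  rewrite Rabs_mult, (Rabs_pos_eq (INR (S n))), (Rabs_pos_eq (Rabs M + 1)) by lra.
  nra.
Qed.

Lemma inside_radius (a : nat -> R) (x : R) :
  Rbar_le 1 (CV_radius a) -> Rabs x < 1 -> Rbar_lt (Rabs x) (CV_radius a).
Proof. intros H1 H2. destruct (CV_radius a); simpl in *; lra. Qed.

Lemma INR_S_minus_ge (n : nat) (t : R) : 1 - t <= INR (S n) - t.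
Proof. rewrite S_INR. pose proof (pos_INR n). lra. Qed.

Definition div_shift (t : R) (a : nat -> R) (n : nat) : R := / (INR (S n) - t) * a n.

Definition primitive (t : R) (a : nat -> R) (u : R) : R :=
  Rpower u (1 - t) * PSeries (div_shift t a) u.

Definition integrand (t : R) (a : nat -> R) (u : R) : R :=
  Rpower u (- t) * PSeries a u.

Lemma CV_radius_div_shift (t : R) (a : nat -> R) :
  t < 1 -> Rbar_le 1 (CV_radius a) -> Rbar_le 1 (CV_radius (div_shift t a)).
Proof.
  intros Ht Ha.
  eapply Rbar_le_trans; [|apply (CV_radius_le_of_Rabs _ (PS_scal (/ (1 - t)) a))].
  - rewrite CV_radius_scal; [exact Ha|]. apply Rinv_neq_0_compat; lra.
  - intros n. unfold div_shift, PS_scal.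
    change (scal (/ (1 - t)) (a n)) with (/ (1 - t) * a n).
    rewrite !Rabs_mult. apply Rmult_le_compat_r; [apply Rabs_pos|].
    pose proof (INR_S_minus_ge n t).
    rewrite !Rabs_pos_eq by (left; apply Rinv_0_lt_compat; lra).
    apply Rinv_le_contravar; lra.
Qed.

Lemma Rpower_continuous (c x : R) : 0 < x -> continuity_pt (fun u => Rpower u c) x.
Proof.
  intros Hx. apply derivable_continuous_pt.
  exists (c * Rpower x (c - 1)). apply derivable_pt_lim_power; exact Hx.
Qed.

Lemma Rpower_one_minus (u t : R) : 0 < u -> Rpower u (1 - t) = u * Rpower u (- t).
Proof.
  intros Hu. replace (1 - t) with (1 + - t) by ring.
  rewrite Rpower_plus, Rpower_1 by exact Hu. reflexivity.
Qed.

Lemma Rpower_base_1 (c : R) : Rpower 1 c = 1.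
Proof. unfold Rpower. rewrite ln_1, Rmult_0_r, exp_0. reflexivity. Qed.

(** Termwise: [(1-t) b_n + n b_n = (n+1-t) b_n = a_n] for [b = div_shift t a]. *)
Lemma div_shift_identity (t : R) (a : nat -> R) (x : R) :
  t < 1 -> Rbar_le 1 (CV_radius a) -> Rabs x < 1 ->
  (1 - t) * PSeries (div_shift t a) x + x * PSeries (PS_derive (div_shift t a)) x
  = PSeries a x.
Proof.
  intros Ht Ha Hx.
  assert (Hb := CV_radius_div_shift t a Ht Ha).
  assert (Hex1 : ex_pseries (div_shift t a) x) by (apply CV_radius_inside, inside_radius; auto).
  assert (Hex2 : ex_pseries (PS_incr_1 (PS_derive (div_shift t a))) x).
  { apply CV_radius_inside. rewrite CV_radius_incr_1, CV_radius_derive.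
    apply inside_radius; auto. }
  rewrite <- PSeries_incr_1, <- PSeries_scal, <- PSeries_plus;
    [|apply ex_pseries_scal; [apply Rmult_comm|exact Hex1]|exact Hex2].
  apply PSeries_ext. intros n.
  unfold PS_plus, PS_scal, PS_incr_1, PS_derive, div_shift.
  pose proof (INR_S_minus_ge n t).
  destruct n as [|n]; cbn -[INR]; change zero with 0.
  - rewrite S_INR. simpl INR. field. lra.
  - rewrite (S_INR (S n)) in *. field. lra.
Qed.

Lemma primitive_derive (t : R) (a : nat -> R) (x : R) :
  t < 1 -> Rbar_le 1 (CV_radius a) -> 0 < x < 1 ->
  is_derive (primitive t a) x (integrand t a x).
Proof.
  intros Ht Ha Hx.
  assert (Hxr : Rabs x < 1) by (rewrite Rabs_pos_eq; lra).
  assert (D1 : is_derive (fun u => Rpower u (1 - t)) x ((1 - t) * Rpower x (- t))).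
  { apply is_derive_Reals. replace (- t) with (1 - t - 1) by ring.
    apply derivable_pt_lim_power; lra. }
  assert (D2 := is_derive_PSeries (div_shift t a) x
                  (inside_radius _ _ (CV_radius_div_shift t a Ht Ha) Hxr)).
  pose proof (is_derive_mult _ _ _ _ _ D1 D2 Rmult_comm) as D.
  simpl in D. unfold plus, mult in D; simpl in D.
  unfold primitive, integrand.
  rewrite <- (div_shift_identity t a x Ht Ha Hxr).
  replace (Rpower x (- t) * ((1 - t) * PSeries (div_shift t a) x +
             x * PSeries (PS_derive (div_shift t a)) x))
    with ((1 - t) * Rpower x (- t) * PSeries (div_shift t a) x +
          Rpower x (1 - t) * PSeries (PS_derive (div_shift t a)) x);
    [exact D|].
  rewrite Rpower_one_minus by lra. ring.
Qed.

Lemma primitive_continuous (t : R) (a : nat -> R) (z : R) :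
  t < 1 -> Rbar_le 1 (CV_radius a) -> 0 < z < 1 -> continuity_pt (primitive t a) z.
Proof.
  intros Ht Ha Hz. apply continuity_pt_mult; [apply Rpower_continuous; lra|].
  apply PSeries_continuity, inside_radius; [apply CV_radius_div_shift; auto|].
  rewrite Rabs_pos_eq; lra.
Qed.

Lemma primitive_RInt (t : R) (a : nat -> R) (x y : R) :
  t < 1 -> Rbar_le 1 (CV_radius a) -> 0 < x -> x < y -> y < 1 ->
  is_RInt (integrand t a) x y (primitive t a y - primitive t a x).
Proof.
  intros Ht Ha Hx Hxy Hy.
  apply (is_RInt_derive (primitive t a) (integrand t a)); intros z Hz;
    rewrite Rmin_left, Rmax_right in Hz by lra.
  - apply primitive_derive; auto; lra.
  - apply continuity_pt_filterlim. unfold integrand.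
    apply continuity_pt_mult; [apply Rpower_continuous; lra|].
    apply PSeries_continuity, inside_radius; auto. rewrite Rabs_pos_eq; lra.
Qed.

Lemma continuity_pt_eps (f : R -> R) (z : R) : continuity_pt f z ->
  forall eps, 0 < eps -> exists d, 0 < d /\ forall y, Rabs (y - z) < d -> Rabs (f y - f z) < eps.
Proof.
  intros H eps He. destruct (H eps He) as [d [Hd Hd2]].
  exists d. split; [lra|]. intros y Hy.
  destruct (Req_dec y z) as [->|Hne].
  - unfold Rminus. rewrite Rplus_opp_r, Rabs_R0. exact He.
  - apply (Hd2 y). split; [unfold D_x, no_cond; auto|exact Hy].
Qed.

(** At 0 the power series stays bounded while [u^(1-t)] tends to 0. *)
Lemma primitive_lim_0 (t : R) (a : nat -> R) :
  t < 1 -> Rbar_le 1 (CV_radius a) ->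
  forall eps, 0 < eps -> exists d, 0 < d /\ forall x, 0 < x < d -> Rabs (primitive t a x) < eps.
Proof.
  intros Ht Ha eps He.
  set (p := PSeries (div_shift t a)).
  assert (Hc : continuity_pt p 0).
  { apply PSeries_continuity, inside_radius; [apply CV_radius_div_shift; auto|].
    rewrite Rabs_R0; lra. }
  destruct (continuity_pt_eps _ _ Hc 1 Rlt_0_1) as [d1 [Hd1 Hp]].
  set (B := Rabs (p 0) + 1).
  assert (HB : 0 < B) by (unfold B; pose proof (Rabs_pos (p 0)); lra).
  set (x1 := Rpower (eps / B) (/ (1 - t))).
  assert (Hx1 : Rpower x1 (1 - t) = eps / B).
  { unfold x1. rewrite Rpower_mult, Rinv_l by lra. apply Rpower_1.
    apply Rdiv_lt_0_compat; lra. }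
  exists (Rmin d1 x1). split; [apply Rmin_pos; [lra|apply exp_pos]|].
  intros x [Hx0 Hx]. pose proof (Rmin_l d1 x1). pose proof (Rmin_r d1 x1).
  assert (Hpow : Rpower x (1 - t) < eps / B) by (rewrite <- Hx1; apply Rlt_Rpower_l; lra).
  assert (Hbound : Rabs (p x) < B).
  { specialize (Hp x). rewrite Rminus_0_r, Rabs_pos_eq in Hp by lra.
    pose proof (Rabs_triang_inv (p x) (p 0)). unfold B. specialize (Hp ltac:(lra)). lra. }
  unfold primitive. fold p.
  pose proof (exp_pos ((1 - t) * ln x)) as Hpos. change (0 < Rpower x (1 - t)) in Hpos.
  rewrite Rabs_mult, (Rabs_pos_eq (Rpower x (1 - t))) by lra.
  replace eps with (eps / B * B) by (field; lra).
  pose proof (Rabs_pos (p x)).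
  apply Rle_lt_trans with (Rpower x (1 - t) * B); [apply Rmult_le_compat_l; lra|].
  apply Rmult_lt_compat_r; lra.
Qed.

(** Left limit at 1 of an absolutely summable power series of radius at
    least 1: continuity inside the disc, Abel's theorem on its boundary. *)
Lemma PSeries_left_lim_1 (b : nat -> R) :
  Rbar_le 1 (CV_radius b) -> ex_series (fun n => Rabs (b n)) ->
  forall eps, 0 < eps -> exists d, 0 < d /\ forall y, 1 - d < y < 1 ->
    Rabs (PSeries b y - PSeries b 1) < eps.
Proof.
  intros Hr Hs eps He.
  destruct (Rbar_le_lt_or_eq_dec 1 (CV_radius b) Hr) as [Hlt|Heq].
  - assert (Hc : continuity_pt (PSeries b) 1).
    { apply PSeries_continuity. rewrite Rabs_R1. exact Hlt. }
    destruct (continuity_pt_eps _ _ Hc eps He) as [d [Hd Hd']].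
    exists d. split; auto. intros y Hy. apply Hd'. rewrite Rabs_left; lra.
  - assert (Hex : ex_pseries b 1) by (apply ex_pseries_1, ex_series_Rabs, Hs).
    assert (HA := Abel b). rewrite <- Heq in HA.
    specialize (HA ltac:(simpl; lra) ltac:(simpl; auto) Hex).
    apply filterlim_locally with (eps := mkposreal eps He) in HA.
    destruct HA as [d Hd].
    exists d. split; [apply cond_pos|]. intros y Hy. apply (Hd y).
    + unfold ball; simpl. unfold AbsRing_ball, abs, minus, plus, opp; simpl.
      rewrite Rabs_left; lra.
    + exact (proj2 Hy).
Qed.

(** At 1 the primitive tends to [sum a_n/(n+1-t)]: Abel's theorem for the
    series, continuity for [u^(1-t)]. *)
Lemma primitive_lim_1 (t : R) (a : nat -> R) :
  t < 1 -> Rbar_le 1 (CV_radius a) -> ex_series (fun n => Rabs (div_shift t a n)) ->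
  forall eps, 0 < eps -> exists d, 0 < d /\ forall y, 1 - d < y < 1 ->
    Rabs (primitive t a y - Series (div_shift t a)) < eps.
Proof.
  intros Ht Ha Hs eps He.
  set (S := Series (div_shift t a)).
  destruct (PSeries_left_lim_1 (div_shift t a) (CV_radius_div_shift t a Ht Ha) Hs
              (Rmin 1 (eps / 2))) as [d1 [Hd1 Hp]]; [apply Rmin_pos; lra|].
  rewrite PSeries_1 in Hp. fold S in Hp.
  set (e2 := eps / (2 * (Rabs S + 2))).
  assert (He2 : 0 < e2) by (unfold e2; pose proof (Rabs_pos S); apply Rdiv_lt_0_compat; lra).
  destruct (continuity_pt_eps _ _ (Rpower_continuous (1 - t) 1 Rlt_0_1) e2 He2)
    as [d2 [Hd2 Hq]].
  exists (Rmin d1 d2). split; [apply Rmin_pos; lra|].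
  intros y [Hy1 Hy2]. pose proof (Rmin_l d1 d2). pose proof (Rmin_r d1 d2).
  specialize (Hp y ltac:(lra)). specialize (Hq y ltac:(rewrite Rabs_left; lra)).
  rewrite Rpower_base_1 in Hq.
  pose proof (Rmin_l 1 (eps / 2)). pose proof (Rmin_r 1 (eps / 2)).
  unfold primitive.
  set (p := PSeries (div_shift t a) y) in *. set (q := Rpower y (1 - t)) in *.
  replace (q * p - S) with ((q - 1) * p + (p - S)) by ring.
  assert (Hpb : Rabs p <= Rabs S + 1) by (pose proof (Rabs_triang_inv p S); lra).
  assert (Hqp : Rabs (q - 1) * Rabs p <= e2 * (Rabs S + 1))
    by (apply Rmult_le_compat; try apply Rabs_pos; lra).
  assert (e2 * (Rabs S + 1) < eps / 2).
  { unfold e2. pose proof (Rabs_pos S).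
    apply Rlt_le_trans with (eps / (2 * (Rabs S + 2)) * (Rabs S + 2));
      [apply Rmult_lt_compat_l; [exact He2|lra]|right; field; lra]. }
  eapply Rle_lt_trans; [apply Rabs_triang|]. rewrite Rabs_mult. lra.
Qed.

Definition Re_seq (al : nat -> Cx) (n : nat) : R := fst (al n).
Definition Im_seq (al : nat -> Cx) (n : nat) : R := snd (al n).

Definition CPS (al : nat -> Cx) (u : R) : Cx :=
  (PSeries (Re_seq al) u, PSeries (Im_seq al) u).

Definition CSeries (al : nat -> Cx) : Cx := (Series (Re_seq al), Series (Im_seq al)).

(** Coefficients [al n / (n+1-t)]: the coefficients of the primitive. *)
Definition Cdiv_shift (t : R) (al : nat -> Cx) (n : nat) : Cx :=
  Cscale (/ (INR (S n) - t)) (al n).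

Definition poly_bounded (al : nat -> Cx) : Prop :=
  exists M, forall n, Cmod (al n) <= M * INR (S n).

Lemma poly_bounded_radius (al : nat -> Cx) : poly_bounded al ->
  Rbar_le 1 (CV_radius (Re_seq al)) /\ Rbar_le 1 (CV_radius (Im_seq al)).
Proof.
  intros [M HM]. split; apply (CV_radius_linear_growth _ M); intros n;
    (eapply Rle_trans; [|apply HM]); [apply Rabs_fst_le_Cmod|apply Rabs_snd_le_Cmod].
Qed.

Definition CPS_conv (al : nat -> Cx) (u : R) : Prop :=
  ex_pseries (Re_seq al) u /\ ex_pseries (Im_seq al) u.

Lemma poly_bounded_CPS_conv (al : nat -> Cx) (u : R) :
  poly_bounded al -> Rabs u < 1 -> CPS_conv al u.
Proof.
  intros Hb Hu. destruct (poly_bounded_radius al Hb) as [H1 H2].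
  split; apply CV_radius_inside, inside_radius; auto.
Qed.

Lemma CPS_conv_Cadd (al be : nat -> Cx) (u : R) :
  CPS_conv al u -> CPS_conv be u -> CPS_conv (fun n => Cadd (al n) (be n)) u.
Proof.
  intros [H1 H2] [H3 H4].
  exact (conj (ex_pseries_plus _ _ u H1 H3) (ex_pseries_plus _ _ u H2 H4)).
Qed.

Lemma CPS_ext (al be : nat -> Cx) (u : R) : (forall n, al n = be n) -> CPS al u = CPS be u.
Proof.
  intros H. unfold CPS. f_equal; apply PSeries_ext; intros n;
    unfold Re_seq, Im_seq; rewrite H; reflexivity.
Qed.

Lemma CPS_Cadd (al be : nat -> Cx) (u : R) : CPS_conv al u -> CPS_conv be u ->
  CPS (fun n => Cadd (al n) (be n)) u = Cadd (CPS al u) (CPS be u).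
Proof.
  intros [H1 H2] [H3 H4]. unfold CPS, Cadd; simpl. f_equal;
    [rewrite <- (PSeries_plus (Re_seq al))|rewrite <- (PSeries_plus (Im_seq al))];
    auto; apply PSeries_ext; reflexivity.
Qed.

Lemma PSeries_lin2 (x y : R) (a b : nat -> R) (u : R) :
  ex_pseries a u -> ex_pseries b u ->
  PSeries (fun n => x * a n + y * b n) u = x * PSeries a u + y * PSeries b u.
Proof.
  intros Ha Hb. rewrite <- !PSeries_scal, <- PSeries_plus;
    try (apply ex_pseries_scal; [apply Rmult_comm|assumption]).
  apply PSeries_ext; reflexivity.
Qed.

Lemma CPS_Cmul_l (P : Cx) (al : nat -> Cx) (u : R) : CPS_conv al u ->
  CPS (fun n => Cmul P (al n)) u = Cmul P (CPS al u).
Proof.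
  intros [H1 H2]. destruct P as [p1 p2]. unfold CPS, Cmul; simpl. f_equal.
  - rewrite (PSeries_ext _ (fun n => p1 * Re_seq al n + - p2 * Im_seq al n))
      by (intros n; unfold Re_seq, Im_seq; simpl; ring).
    rewrite PSeries_lin2 by assumption. ring.
  - rewrite (PSeries_ext _ (fun n => p2 * Re_seq al n + p1 * Im_seq al n))
      by (intros n; unfold Re_seq, Im_seq; simpl; ring).
    rewrite PSeries_lin2 by assumption. ring.
Qed.

Lemma CPS_shift (al : nat -> Cx) (u : R) : CPS_conv al u ->
  CPS al u = Cadd (al 0%nat) (Cscale u (CPS (fun n => al (S n)) u)).
Proof.
  intros [H1 H2]. unfold CPS, Cadd, Cscale; simpl.
  rewrite (PSeries_decr_1 _ _ H1), (PSeries_decr_1 _ _ H2). reflexivity.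
Qed.

Lemma CPS_recursion (P : Cx) (c g : nat -> Cx) (u : R) :
  poly_bounded c -> poly_bounded g -> 0 <= u < 1 ->
  (forall n, c (S n) = Cmul P (Cadd (c n) (g n))) ->
  CPS c u = Cadd (c 0%nat) (Cscale u (Cmul P (Cadd (CPS c u) (CPS g u)))).
Proof.
  intros Hc Hg Hu Hrec.
  assert (Hur : Rabs u < 1) by (rewrite Rabs_pos_eq; lra).
  assert (Cc := poly_bounded_CPS_conv c u Hc Hur).
  assert (Cg := poly_bounded_CPS_conv g u Hg Hur).
  rewrite (CPS_shift c u Cc) at 1. f_equal. f_equal.
  rewrite (CPS_ext _ _ u Hrec), CPS_Cmul_l, CPS_Cadd by auto using CPS_conv_Cadd.
  reflexivity.
Qed.

Lemma CPS_C0 (u : R) : CPS (fun _ => C0) u = C0.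
Proof.
  unfold CPS, Re_seq, Im_seq, C0; simpl. rewrite PSeries_const_0. reflexivity.
Qed.

Lemma RiemannInt_of_is_RInt (f g : R -> R) (a b v : R) :
  a < b -> (forall u, a <= u <= b -> g u = f u) -> is_RInt f a b v ->
  exists pr : Riemann_integrable g a b, RiemannInt pr = v.
Proof.
  intros Hab Hfg HI.
  assert (HI' : is_RInt g a b v).
  { apply (is_RInt_ext f); [|exact HI]. intros u Hu.
    rewrite Rmin_left, Rmax_right in Hu by lra. symmetry. apply Hfg. lra. }
  exists (ex_RInt_Reals_0 _ _ _ (ex_intro _ v HI')).
  rewrite <- RInt_Reals. apply is_RInt_unique. exact HI'.
Qed.

(** The improper integral over ]0,z[ exists and equals [v] as soon as the
    primitives of both components tend to the components of [v] at [z-]: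
    at [0+] they tend to 0 by [primitive_lim_0]. *)
Lemma CImpInt_of_primitive (t : R) (al : nat -> Cx) (g : R -> Cx) (z : R) (v : Cx) :
  t < 1 -> poly_bounded al ->
  (forall u, 0 < u < 1 -> g u = Cscale (Rpower u (- t)) (CPS al u)) ->
  0 < z <= 1 ->
  (forall eps, 0 < eps -> exists d, 0 < d /\ forall y, z - d < y < z ->
     Rabs (primitive t (Re_seq al) y - fst v) < eps /\
     Rabs (primitive t (Im_seq al) y - snd v) < eps) ->
  CImpInt g z v.
Proof.
  intros Ht Hb Hg Hz Hlim eps He.
  set (a1 := Re_seq al). set (a2 := Im_seq al).
  destruct (poly_bounded_radius al Hb) as [R1 R2].
  destruct (Hlim (eps / 4) ltac:(lra)) as [d1 [Hd1 Hz1]].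
  destruct (primitive_lim_0 t a1 Ht R1 (eps / 4) ltac:(lra)) as [d2 [Hd2 H01]].
  destruct (primitive_lim_0 t a2 Ht R2 (eps / 4) ltac:(lra)) as [d3 [Hd3 H02]].
  exists (Rmin d1 (Rmin d2 d3)). split; [apply Rmin_pos; [lra|apply Rmin_pos; lra]|].
  intros x y Hx Hy Hxy.
  pose proof (Rmin_l d1 (Rmin d2 d3)). pose proof (Rmin_r d1 (Rmin d2 d3)).
  pose proof (Rmin_l d2 d3). pose proof (Rmin_r d2 d3).
  exists (primitive t a1 y - primitive t a1 x, primitive t a2 y - primitive t a2 x).
  split.
  - split; simpl.
    + apply (RiemannInt_of_is_RInt (integrand t a1)); [lra| |apply primitive_RInt; auto; lra].
      intros u Hu. rewrite Hg by lra. reflexivity.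
    + apply (RiemannInt_of_is_RInt (integrand t a2)); [lra| |apply primitive_RInt; auto; lra].
      intros u Hu. rewrite Hg by lra. reflexivity.
  - destruct (Hz1 y ltac:(lra)) as [E1 E2]. fold a1 a2 in E1, E2.
    specialize (H01 x ltac:(lra)). specialize (H02 x ltac:(lra)).
    eapply Rle_lt_trans; [apply Cmod_le_Rabs_sum|]. simpl.
    assert (Rabs (primitive t a1 y - primitive t a1 x + - fst v) < eps / 2).
    { replace (primitive t a1 y - primitive t a1 x + - fst v)
        with ((primitive t a1 y - fst v) + - primitive t a1 x) by ring.
      eapply Rle_lt_trans; [apply Rabs_triang|]. rewrite Rabs_Ropp. lra. }
    assert (Rabs (primitive t a2 y - primitive t a2 x + - snd v) < eps / 2).
    { replace (primitive t a2 y - primitive t a2 x + - snd v)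
        with ((primitive t a2 y - snd v) + - primitive t a2 x) by ring.
      eapply Rle_lt_trans; [apply Rabs_triang|]. rewrite Rabs_Ropp. lra. }
    lra.
Qed.

Lemma CImpInt_inner (t : R) (al : nat -> Cx) (g : R -> Cx) (z : R) :
  t < 1 -> poly_bounded al ->
  (forall u, 0 < u < 1 -> g u = Cscale (Rpower u (- t)) (CPS al u)) ->
  0 < z < 1 ->
  CImpInt g z (Cscale (Rpower z (1 - t)) (CPS (Cdiv_shift t al) z)).
Proof.
  intros Ht Hb Hg Hz.
  apply (CImpInt_of_primitive t al); auto; [lra|].
  destruct (poly_bounded_radius al Hb) as [R1 R2].
  intros eps He.
  destruct (continuity_pt_eps _ _ (primitive_continuous t _ z Ht R1 Hz) eps He)
    as [d1 [Hd1 Hc1]].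
  destruct (continuity_pt_eps _ _ (primitive_continuous t _ z Ht R2 Hz) eps He)
    as [d2 [Hd2 Hc2]].
  exists (Rmin d1 d2). split; [apply Rmin_pos; lra|].
  intros y Hy. pose proof (Rmin_l d1 d2). pose proof (Rmin_r d1 d2).
  split; [apply Hc1|apply Hc2]; rewrite Rabs_left; lra.
Qed.

Lemma CImpInt_at_1 (t : R) (al : nat -> Cx) (g : R -> Cx) :
  t < 1 -> poly_bounded al ->
  (forall u, 0 < u < 1 -> g u = Cscale (Rpower u (- t)) (CPS al u)) ->
  ex_series (fun n => Cmod (Cdiv_shift t al n)) ->
  CImpInt g 1 (CSeries (Cdiv_shift t al)).
Proof.
  intros Ht Hb Hg Hs.
  assert (Habs : forall f : Cx -> R, (forall z, Rabs (f z) <= Cmod z) ->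
            ex_series (fun n => Rabs (f (Cdiv_shift t al n)))).
  { intros f Hf. apply (@ex_series_le R_AbsRing R_CompleteNormedModule _ (fun n => Cmod (Cdiv_shift t al n)));
      [|exact Hs].
    intros n. unfold norm; simpl. unfold abs; simpl. rewrite Rabs_Rabsolu. apply Hf. }
  apply (CImpInt_of_primitive t al); auto; [lra|].
  destruct (poly_bounded_radius al Hb) as [R1 R2].
  intros eps He.
  destruct (primitive_lim_1 t (Re_seq al) Ht R1 (Habs fst Rabs_fst_le_Cmod) eps He)
    as [d1 [Hd1 Hl1]].
  destruct (primitive_lim_1 t (Im_seq al) Ht R2 (Habs snd Rabs_snd_le_Cmod) eps He)
    as [d2 [Hd2 Hl2]].
  exists (Rmin d1 d2). split; [apply Rmin_pos; lra|].
  intros y Hy. pose proof (Rmin_l d1 d2). pose proof (Rmin_r d1 d2).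
  split; [apply Hl1|apply Hl2]; lra.
Qed.

Lemma CSeries_ext (al be : nat -> Cx) : (forall n, al n = be n) -> CSeries al = CSeries be.
Proof.
  intros H. unfold CSeries. f_equal; apply Series_ext; intros n;
    unfold Re_seq, Im_seq; rewrite H; reflexivity.
Qed.

Fixpoint Rsum_lt (f : nat -> R) (m : nat) : R :=
  match m with
  | O => 0
  | S k => match k with O => 0 | _ => Rsum_lt f k + f k end
  end.

Lemma Rsum_lt_S (f : nat -> R) (m : nat) : (1 <= m)%nat -> Rsum_lt f (S m) = Rsum_lt f m + f m.
Proof. intros H. destruct m; [lia|reflexivity]. Qed.

Lemma Csum_lt_S (f : nat -> Cx) (m : nat) :
  (1 <= m)%nat -> Csum_lt f (S m) = Cadd (Csum_lt f m) (f m).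
Proof. intros H. destruct m; [lia|reflexivity]. Qed.

Lemma Cmod_Csum_lt_le (f : nat -> Cx) (m : nat) :
  Cmod (Csum_lt f m) <= Rsum_lt (fun n => Cmod (f n)) m.
Proof.
  induction m as [|[|m] IH]; try (simpl; rewrite Cmod_C0; lra).
  rewrite Csum_lt_S, Rsum_lt_S by lia.
  eapply Rle_trans; [apply Cmod_Cadd_le|]. lra.
Qed.

Lemma Rsum_lt_le (f g : nat -> R) (m : nat) :
  (forall n, (1 <= n)%nat -> (n < m)%nat -> f n <= g n) -> Rsum_lt f m <= Rsum_lt g m.
Proof.
  induction m as [|[|m] IH]; intros H; try (simpl; lra).
  rewrite (Rsum_lt_S f), (Rsum_lt_S g) by lia.
  assert (Rsum_lt f (S m) <= Rsum_lt g (S m)) by (apply IH; intros; apply H; lia).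
  assert (f (S m) <= g (S m)) by (apply H; lia). lra.
Qed.

Lemma Rsum_lt_scal (c : R) (f : nat -> R) (m : nat) :
  Rsum_lt (fun n => c * f n) m = c * Rsum_lt f m.
Proof.
  induction m as [|[|m] IH]; try (simpl; ring).
  rewrite (Rsum_lt_S (fun n => c * f n)), (Rsum_lt_S f), IH by lia. ring.
Qed.

(** [sum_{n<m} 1/sqrt n <= 2 sqrt m], by comparison with the integral. *)
Lemma Rsum_lt_inv_sqrt (m : nat) : Rsum_lt (fun n => / sqrt (INR n)) m <= 2 * sqrt (INR m).
Proof.
  assert (Hsucc : forall m, Rsum_lt (fun n => / sqrt (INR n)) (S m) <= 2 * sqrt (INR m)).
  { induction m0 as [|m0 IH]; [simpl; rewrite sqrt_0; lra|].
    rewrite Rsum_lt_S by lia.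
    set (x := sqrt (INR m0)) in *. set (y := sqrt (INR (S m0))).
    assert (Hx : 0 <= x) by apply sqrt_pos.
    assert (Hm : 0 <= INR m0) by apply pos_INR.
    assert (Hy : 0 < y) by (apply sqrt_lt_R0; rewrite S_INR; lra).
    assert (Hx2 : x * x = INR m0) by (apply sqrt_sqrt; lra).
    assert (Hy2 : y * y = INR m0 + 1) by (unfold y; rewrite sqrt_sqrt, S_INR; [lra|rewrite S_INR; lra]).
    assert (H2 : / y * y = 1) by (apply Rinv_l; lra).
    assert (H3 : 2 * x + / y <= 2 * y).
    { apply (Rmult_le_reg_r y); [lra|]. rewrite Rmult_plus_distr_r, H2. nra. }
    lra. }
  eapply Rle_trans; [|apply Hsucc].
  destruct m as [|m]; [simpl; lra|].
  rewrite (Rsum_lt_S _ (S m)) by lia.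
  assert (0 < / sqrt (INR (S m))).
  { apply Rinv_0_lt_compat, sqrt_lt_R0. rewrite S_INR. pose proof (pos_INR m); lra. }
  lra.
Qed.

Lemma pow_le_1 (a : R) (m : nat) : 0 <= a <= 1 -> a ^ m <= 1.
Proof.
  intros H. induction m; simpl; [lra|].
  assert (0 <= a ^ m) by (apply pow_le; lra). nra.
Qed.

Lemma pow_antimono (a : R) (n m : nat) : 0 <= a <= 1 -> (n <= m)%nat -> a ^ m <= a ^ n.
Proof.
  intros Ha Hnm. replace m with (n + (m - n))%nat by lia.
  rewrite pow_add. assert (0 <= a ^ n) by (apply pow_le; lra).
  assert (a ^ (m - n) <= 1) by (apply pow_le_1; auto).
  assert (0 <= a ^ (m - n)) by (apply pow_le; lra). nra.
Qed.

(** [x - t >= gap t * x] for [x >= 1]. *)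
Definition gap (t : R) : R := Rmin 1 (1 - t).

Lemma gap_pos (t : R) : t < 1 -> 0 < gap t.
Proof. intros. unfold gap. apply Rmin_pos; lra. Qed.

Lemma inv_pow_shift_le (t x : R) (i j : nat) :
  t < 1 -> 1 <= x -> (i <= j)%nat -> / ((x - t) ^ j) <= / (gap t ^ j) * / (x ^ i).
Proof.
  intros Ht Hx Hij.
  assert (Hg := gap_pos t Ht). pose proof (Rmin_l 1 (1 - t)). pose proof (Rmin_r 1 (1 - t)).
  assert (Hxt : gap t * x <= x - t) by (unfold gap in *; destruct (Rle_dec t 0); nra).
  assert (Hlow : x ^ j * gap t ^ j <= (x - t) ^ j).
  { rewrite <- Rpow_mult_distr, Rmult_comm. apply pow_incr. nra. }
  assert (Hxi : 0 < x ^ i) by (apply pow_lt; lra).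
  assert (Hij' : x ^ i <= x ^ j) by (apply Rle_pow; auto).
  assert (Hgj : 0 < gap t ^ j) by (apply pow_lt; lra).
  rewrite <- Rinv_mult. apply Rinv_le_contravar; [nra|].
  apply Rle_trans with (x ^ j * gap t ^ j); [|exact Hlow]. nra.
Qed.

Lemma Cmod_Di_level_S (s : nat -> nat) (xi : nat -> Cx) (t : nat -> R) (d k m : nat) :
  Cmod (Di_level s xi t (S d) k m) <=
  Rsum_lt (fun n => Rabs (/ ((INR n - t k) ^ s k)) * Cmod (xi k) ^ n *
                    Cmod (Di_level s xi t d (S k) n)) m.
Proof.
  eapply Rle_trans; [apply Cmod_Csum_lt_le|]. apply Rsum_lt_le. intros n _ _.
  apply Req_le. unfold Di_term. rewrite Cmod_Cmul, Cmod_Cscale, Cmod_Cpow. reflexivity.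
Qed.

Lemma inv_mul_sqrt (x : R) : 0 < x -> / x * sqrt x = / sqrt x.
Proof.
  intros H. assert (Hs : 0 < sqrt x) by (apply sqrt_lt_R0; lra).
  rewrite <- (sqrt_sqrt x) at 1 by lra. field. lra.
Qed.

(** Estimate of one term of a summation level: with [iv <= K/x] standing
    for [1/(n-t)^j] and [(a b)^n D = O(sqrt x)] by induction, the term
    weighted by [a^m] ([m >= n], [a <= 1]) is [O(1/sqrt x)]. *)
Lemma growth_term (a b x iv K D C' : R) (n m : nat) :
  0 <= a <= 1 -> 0 <= b -> 1 <= x -> 0 <= iv <= K * / x -> 0 <= D -> (n <= m)%nat ->
  (a * b) ^ n * D <= C' * sqrt x -> a ^ m * (iv * b ^ n * D) <= C' * K * / sqrt x.
Proof.
  intros Ha Hb Hx Hiv HD Hnm HC.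
  rewrite Rpow_mult_distr in HC.
  assert (a ^ m <= a ^ n) by (apply pow_antimono; auto).
  assert (0 <= a ^ m) by (apply pow_le; lra).
  assert (0 <= b ^ n) by (apply pow_le; lra).
  assert (0 <= a ^ n * b ^ n * D) by (apply Rmult_le_pos; [apply Rmult_le_pos|]; auto; lra).
  assert (0 <= iv * b ^ n * D) by (apply Rmult_le_pos; [apply Rmult_le_pos|]; lra).
  apply Rle_trans with (iv * (a ^ n * b ^ n * D)); [nra|].
  apply Rle_trans with (K * / x * (C' * sqrt x)); [apply Rmult_le_compat; lra|].
  rewrite <- (inv_mul_sqrt x) by lra. right. ring.
Qed.

(** The level sums fewer than
    [m] terms, each [O(1/n) * O(sqrt n)] by induction (condition (E) keeps the
    powers of the [P_k] bounded), and [sum_{n<m} 1/sqrt n = O(sqrt m)]. *)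
Lemma Di_level_growth (r : nat) (s : nat -> nat) (xi : nat -> Cx) (t : nat -> R) :
  condE r xi t -> (forall i, (1 <= i <= r)%nat -> (1 <= s i)%nat) ->
  forall d k, (k + d = r)%nat -> (1 <= k)%nat ->
  exists C, 0 <= C /\ forall m, (1 <= m)%nat ->
    Cmod (Cprod1 xi k) ^ m * Cmod (Di_level s xi t d (S k) m) <= C * sqrt (INR m).
Proof.
  intros HE Hs d. induction d as [|d IH]; intros k Hk Hk1.
  - exists 1. split; [lra|]. intros m Hm. simpl Di_level. rewrite Cmod_C1, Rmult_1_r.
    destruct (HE k ltac:(lia)) as [HP _].
    assert (Cmod (Cprod1 xi k) ^ m <= 1) by (apply pow_le_1; split; [apply Cmod_nonneg|auto]).
    assert (1 <= sqrt (INR m)) by (rewrite <- sqrt_1; apply sqrt_le_1_alt, (le_INR 1), Hm).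
    lra.
  - destruct (IH (S k) ltac:(lia) ltac:(lia)) as [C' [HC' HCb]].
    destruct (HE k ltac:(lia)) as [HP _].
    destruct (HE (S k) ltac:(lia)) as [_ Ht].
    assert (Hj : (1 <= s (S k))%nat) by (apply Hs; lia).
    set (K := / (gap (t (S k)) ^ s (S k))).
    assert (HK : 0 < K) by (apply Rinv_0_lt_compat, pow_lt, gap_pos, Ht).
    set (a := Cmod (Cprod1 xi k)). set (b := Cmod (xi (S k))).
    assert (Ha : 0 <= a <= 1) by (split; [apply Cmod_nonneg|exact HP]).
    assert (Hb : 0 <= b) by apply Cmod_nonneg.
    exists (2 * C' * K). split; [nra|]. intros m Hm.
    assert (Hterm : forall n, (1 <= n)%nat -> (n < m)%nat ->
      a ^ m * (Rabs (/ ((INR n - t (S k)) ^ s (S k))) * b ^ n *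
               Cmod (Di_level s xi t d (S (S k)) n)) <= C' * K * / sqrt (INR n)).
    { intros n Hn Hnm.
      assert (Hn' : 1 <= INR n) by (apply (le_INR 1); exact Hn).
      assert (Hpos : 0 < (INR n - t (S k)) ^ s (S k)) by (apply pow_lt; lra).
      assert (Hiv := inv_pow_shift_le (t (S k)) (INR n) 1 (s (S k)) Ht Hn' Hj).
      rewrite pow_1 in Hiv.
      specialize (HCb n Hn). simpl Cprod1 in HCb. rewrite Cmod_Cmul in HCb.
      apply (growth_term a b); auto; [|apply Cmod_nonneg|lia].
      rewrite Rabs_pos_eq by (left; apply Rinv_0_lt_compat, Hpos).
      split; [left; apply Rinv_0_lt_compat, Hpos|exact Hiv]. }
    eapply Rle_trans; [apply Rmult_le_compat_l; [apply pow_le; lra|apply Cmod_Di_level_S]|].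
    rewrite <- Rsum_lt_scal.
    eapply Rle_trans; [apply Rsum_lt_le; exact Hterm|].
    rewrite Rsum_lt_scal.
    apply Rle_trans with (C' * K * (2 * sqrt (INR m))); [|right; ring].
    apply Rmult_le_compat_l; [nra|apply Rsum_lt_inv_sqrt].
Qed.

(** [sum 1/n^(3/2)] converges: its partial sums stay below [3 - 2/sqrt(N+1)]. *)
Lemma inv_pow_3_2_step (N : R) : 0 <= N ->
  / ((N + 2) * sqrt (N + 2)) + 2 / sqrt (N + 2) <= 2 / sqrt (N + 1).
Proof.
  intros HN.
  set (x := sqrt (N + 1)). set (y := sqrt (N + 2)).
  assert (Hx : 0 < x) by (apply sqrt_lt_R0; lra).
  assert (Hy : 0 < y) by (apply sqrt_lt_R0; lra).
  assert (Hx2 : x * x = N + 1) by (apply sqrt_sqrt; lra).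
  assert (Hy2 : y * y = N + 2) by (apply sqrt_sqrt; lra).
  assert (Hk : x * (2 * y * y + 1) <= 2 * y * y * y).
  { assert (Hsq : (x * (2 * y * y + 1)) * (x * (2 * y * y + 1)) <=
                  (2 * y * y * y) * (2 * y * y * y)).
    { replace ((x * (2 * y * y + 1)) * (x * (2 * y * y + 1)))
        with ((x * x) * (2 * y * y + 1) * (2 * y * y + 1)) by ring.
      rewrite Hx2. replace (N + 1) with (y * y - 1) by lra. nra. }
    assert (0 <= x * (2 * y * y + 1)) by nra.
    assert (0 <= 2 * y * y * y) by nra. nra. }
  rewrite <- Hy2.
  replace (/ (y * y * y) + 2 / y) with ((2 * y * y + 1) / (y * y * y)) by (field; lra).
  apply (Rmult_le_reg_r (x * (y * y * y))); [nra|].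
  replace ((2 * y * y + 1) / (y * y * y) * (x * (y * y * y))) with (x * (2 * y * y + 1))
    by (field; lra).
  replace (2 / x * (x * (y * y * y))) with (2 * y * y * y) by (field; lra).
  exact Hk.
Qed.

Lemma ex_series_inv_pow_3_2 : ex_series (fun n => / (INR (S n) * sqrt (INR (S n)))).
Proof.
  set (a := fun n => / (INR (S n) * sqrt (INR (S n)))).
  assert (Hpos : forall n, 0 <= a n).
  { intros n. left. apply Rinv_0_lt_compat. rewrite S_INR. pose proof (pos_INR n).
    assert (0 < sqrt (INR n + 1)) by (apply sqrt_lt_R0; lra). nra. }
  assert (Hpart : forall N, sum_n a N <= 3 - 2 / sqrt (INR N + 1)).
  { induction N as [|N IH].
    - rewrite sum_O. unfold a. simpl. rewrite Rplus_0_l, sqrt_1. lra.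
    - rewrite sum_Sn. change plus with Rplus. unfold a at 2.
      pose proof (pos_INR N). pose proof (inv_pow_3_2_step (INR N) H).
      rewrite !S_INR. replace (INR N + 1 + 1) with (INR N + 2) by ring. lra. }
  destruct (ex_finite_lim_seq_incr (sum_n a) 3) as [l Hl]; [| |exists l; exact Hl].
  - intros n. rewrite sum_Sn. specialize (Hpos (S n)). unfold plus; simpl. lra.
  - intros N. specialize (Hpart N).
    assert (0 < sqrt (INR N + 1)) by (apply sqrt_lt_R0; pose proof (pos_INR N); lra).
    assert (0 < 2 / sqrt (INR N + 1)) by (apply Rdiv_lt_0_compat; lra). lra.
Qed.

Definition coef (r : nat) (s : nat -> nat) (xi : nat -> Cx) (t : nat -> R)
  (k j n : nat) : Cx :=
  Cmul (Cscale (/ ((INR (S n) - t k) ^ j)) (Cpow (Cprod1 xi k) (S n)))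
       (Di_level s xi t (r - k) (S k) (S n)).

Definition gen (r : nat) (s : nat -> nat) (xi : nat -> Cx) (t : nat -> R)
  (k j : nat) (u : R) : Cx :=
  Cscale (Rpower u (1 - t k)) (CPS (coef r s xi t k j) u).

Section Coefficients.
Variables (r : nat) (s : nat -> nat) (xi : nat -> Cx) (t : nat -> R).
Hypothesis HE : condE r xi t.
Hypothesis Hs : forall i, (1 <= i <= r)%nat -> (1 <= s i)%nat.

(** Raising [j] divides the coefficients by [n+1-t_k]: it integrates [gen]. *)
Lemma coef_succ (k j n : nat) : t k < 1 ->
  coef r s xi t k (S j) n = Cdiv_shift (t k) (coef r s xi t k j) n.
Proof.
  intros Ht. unfold coef, Cdiv_shift. simpl pow.
  assert (0 < INR (S n) - t k) by (pose proof (INR_S_minus_ge n (t k)); lra).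
  rewrite Rinv_mult.
  destruct (Cpow (Cprod1 xi k) (S n)) as [p1 p2].
  destruct (Di_level s xi t (r - k) (S k) (S n)) as [d1 d2].
  unfold Cmul, Cscale; simpl. f_equal; ring.
Qed.

Lemma gen_succ (k j : nat) (z : R) : t k < 1 ->
  gen r s xi t k (S j) z = Cscale (Rpower z (1 - t k)) (CPS (Cdiv_shift (t k) (coef r s xi t k j)) z).
Proof.
  intros Ht. unfold gen. f_equal. apply CPS_ext. intros n. apply coef_succ, Ht.
Qed.

Lemma Cmod_coef_le (k j : nat) : (1 <= k <= r)%nat ->
  exists C, 0 <= C /\ forall n,
    Cmod (coef r s xi t k j n) <= / ((INR (S n) - t k) ^ j) * (C * sqrt (INR (S n))).
Proof.
  intros Hk.
  destruct (Di_level_growth r s xi t HE Hs (r - k) k ltac:(lia) ltac:(lia)) as [C [HC HCb]].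
  destruct (HE k Hk) as [_ Ht].
  exists C. split; [exact HC|]. intros n.
  assert (Hpos : 0 < (INR (S n) - t k) ^ j)
    by (apply pow_lt; pose proof (INR_S_minus_ge n (t k)); lra).
  unfold coef. rewrite Cmod_Cmul, Cmod_Cscale, Cmod_Cpow, Rmult_assoc.
  rewrite Rabs_pos_eq by (left; apply Rinv_0_lt_compat, Hpos).
  apply Rmult_le_compat_l; [left; apply Rinv_0_lt_compat, Hpos|]. apply HCb. lia.
Qed.

Lemma coef_poly_bounded (k j : nat) : (1 <= k <= r)%nat -> poly_bounded (coef r s xi t k j).
Proof.
  intros Hk. destruct (Cmod_coef_le k j Hk) as [C [HC Hb]].
  destruct (HE k Hk) as [_ Ht].
  exists ((/ (1 - t k)) ^ j * C). intros n.
  eapply Rle_trans; [apply Hb|].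
  assert (Hx := INR_S_minus_ge n (t k)).
  assert (Hn : 1 <= INR (S n)) by (rewrite S_INR; pose proof (pos_INR n); lra).
  assert (Hsq : sqrt (INR (S n)) <= INR (S n)).
  { assert (1 <= sqrt (INR (S n))) by (rewrite <- sqrt_1; apply sqrt_le_1_alt; lra).
    rewrite <- (sqrt_sqrt (INR (S n))) at 2 by lra. nra. }
  assert (Hiv : / ((INR (S n) - t k) ^ j) <= (/ (1 - t k)) ^ j).
  { rewrite <- pow_inv. apply pow_incr. split; [left; apply Rinv_0_lt_compat; lra|].
    apply Rinv_le_contravar; lra. }
  assert (0 <= / ((INR (S n) - t k) ^ j)) by (left; apply Rinv_0_lt_compat, pow_lt; lra).
  rewrite Rmult_assoc. apply Rmult_le_compat; auto.
  - apply Rmult_le_pos; [exact HC|apply sqrt_pos].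
  - apply Rmult_le_compat_l; auto.
Qed.

(** For [j >= 2] the coefficients are [O(n^(-3/2))], hence absolutely
    summable; this is where the hypothesis [s_1 > 1] enters. *)
Lemma coef_summable (k j : nat) : (1 <= k <= r)%nat -> (2 <= j)%nat ->
  ex_series (fun n => Cmod (coef r s xi t k j n)).
Proof.
  intros Hk Hj. destruct (Cmod_coef_le k j Hk) as [C [HC Hb]].
  destruct (HE k Hk) as [_ Ht].
  set (K := / (gap (t k) ^ j)).
  assert (HK : 0 < K) by (apply Rinv_0_lt_compat, pow_lt, gap_pos, Ht).
  apply (@ex_series_le R_AbsRing R_CompleteNormedModule _
           (fun n => K * C * / (INR (S n) * sqrt (INR (S n))))).
  2: { eapply ex_series_ext; [|apply (ex_series_scal_l (K * C)), ex_series_inv_pow_3_2].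
       intros; reflexivity. }
  intros n. change (Rabs (Cmod (coef r s xi t k j n)) <=
                    K * C * / (INR (S n) * sqrt (INR (S n)))).
  rewrite Rabs_pos_eq by apply Cmod_nonneg.
  eapply Rle_trans; [apply Hb|].
  assert (Hn : 1 <= INR (S n)) by (rewrite S_INR; pose proof (pos_INR n); lra).
  assert (Hiv := inv_pow_shift_le (t k) (INR (S n)) 2 j Ht Hn Hj). fold K in Hiv.
  assert (Hs0 : 0 < sqrt (INR (S n))) by (apply sqrt_lt_R0; lra).
  apply Rle_trans with (K * / (INR (S n) ^ 2) * (C * sqrt (INR (S n)))).
  { apply Rmult_le_compat_r; [apply Rmult_le_pos; lra|exact Hiv]. }
  right. set (q := sqrt (INR (S n))) in *.
  assert (Hq : INR (S n) = q * q) by (symmetry; apply sqrt_sqrt; lra).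
  rewrite Hq. field. lra.
Qed.

End Coefficients.

Lemma Cpow_Cmul (a b : Cx) (n : nat) : Cpow (Cmul a b) n = Cmul (Cpow a n) (Cpow b n).
Proof.
  induction n as [|n IH]; simpl.
  - unfold C1, Cmul; simpl. f_equal; ring.
  - rewrite IH. to_Coquelicot. ring.
Qed.

(** Recursions in [n] for [coef k 0]: the last letter contributes
    [coef r 0 n = P_r^(n+1)], and for [k < r] the sum defining
    [Di_level] gains the term of index [n+1], i.e.
    [coef k 0 (n+1) = P_k (coef k 0 n + coef (k+1) s_(k+1) n)]. *)
Lemma coef_top (r : nat) (s : nat -> nat) (xi : nat -> Cx) (t : nat -> R) (n : nat) :
  coef r s xi t r 0 n = Cpow (Cprod1 xi r) (S n).
Proof.
  unfold coef. rewrite Nat.sub_diag. simpl pow. rewrite Rinv_1.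
  destruct (Cpow (Cprod1 xi r) (S n)) as [q1 q2].
  simpl Di_level. unfold Cmul, Cscale, C1; simpl. f_equal; ring.
Qed.

Lemma coef_top_0 (r : nat) (s : nat -> nat) (xi : nat -> Cx) (t : nat -> R) :
  coef r s xi t r 0 0 = Cprod1 xi r.
Proof. rewrite coef_top. simpl Cpow. to_Coquelicot. ring. Qed.

Lemma coef_top_rec (r : nat) (s : nat -> nat) (xi : nat -> Cx) (t : nat -> R) (n : nat) :
  coef r s xi t r 0 (S n) = Cmul (Cprod1 xi r) (Cadd (coef r s xi t r 0 n) C0).
Proof.
  rewrite !coef_top. simpl Cpow. to_Coquelicot. ring.
Qed.

Lemma coef_low_0 (r : nat) (s : nat -> nat) (xi : nat -> Cx) (t : nat -> R) (k : nat) :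
  (k < r)%nat -> coef r s xi t k 0 0 = C0.
Proof.
  intros Hk. unfold coef. replace (r - k)%nat with (S (r - S k)) by lia.
  simpl Di_level at 1. simpl Csum_lt.
  destruct (Cscale _ _) as [a b]. unfold Cmul, C0; simpl. f_equal; ring.
Qed.

Lemma coef_low_rec (r : nat) (s : nat -> nat) (xi : nat -> Cx) (t : nat -> R) (k n : nat) :
  (k < r)%nat ->
  coef r s xi t k 0 (S n) =
  Cmul (Cprod1 xi k) (Cadd (coef r s xi t k 0 n) (coef r s xi t (S k) (s (S k)) n)).
Proof.
  intros Hk. unfold coef.
  replace (r - k)%nat with (S (r - S k)) by lia.
  set (f := fun m => Cmul (Di_term s xi t (S k) m) (Di_level s xi t (r - S k) (S (S k)) m)).
  change (Di_level s xi t (S (r - S k)) (S k) (S (S n))) with (Csum_lt f (S (S n))).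
  change (Di_level s xi t (S (r - S k)) (S k) (S n)) with (Csum_lt f (S n)).
  rewrite (Csum_lt_S _ (S n)) by lia. unfold f, Di_term.
  change (Cprod1 xi (S k)) with (Cmul (Cprod1 xi k) (xi (S k))).
  rewrite Cpow_Cmul. simpl pow. rewrite !Rinv_1.
  change (Cpow (Cprod1 xi k) (S (S n))) with (Cmul (Cprod1 xi k) (Cpow (Cprod1 xi k) (S n))).
  to_Coquelicot. ring.
Qed.

(** [1 - u P] does not vanish for [0 <= u < 1] and [|P| <= 1]: its real
    part is positive. *)
Lemma one_minus_nonzero (P : Cx) (u : R) : 0 <= u < 1 -> Cmod P <= 1 ->
  Complex.Cminus (Complex.RtoC 1) (Complex.Cmult (Complex.RtoC u) P) <> Complex.RtoC 0.
Proof.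
  intros Hu HP Heq. destruct P as [p1 p2].
  assert (H1 := f_equal fst Heq). simpl in H1.
  pose proof (Rabs_fst_le_Cmod (p1, p2)) as Hp. simpl in Hp.
  pose proof (Rle_abs p1).
  assert (u * p1 < 1) by (destruct (Rle_dec 0 p1); nra).
  lra.
Qed.

Lemma solve_recursion (P c0 A G : Cx) (u : R) : 0 <= u < 1 -> Cmod P <= 1 ->
  A = Cadd c0 (Cscale u (Cmul P (Cadd A G))) ->
  A = Complex.Cdiv (Complex.Cplus c0 (Complex.Cmult (Complex.Cmult (Complex.RtoC u) P) G))
                   (Complex.Cminus (Complex.RtoC 1) (Complex.Cmult (Complex.RtoC u) P)).
Proof.
  intros Hu HP H. assert (Hn := one_minus_nonzero P u Hu HP).
  to_Coquelicot.
  set (uP := Complex.Cmult (Complex.RtoC u) P) in *.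
  assert (E : Complex.Cminus A (Complex.Cmult uP A) = Complex.Cplus c0 (Complex.Cmult uP G))
    by (rewrite H at 1; unfold uP; ring).
  rewrite <- E. field. exact Hn.
Qed.

Lemma omega_x0_identity (u c : R) (X : Cx) : 0 < u ->
  Cmul (omega x0 u) (Cscale (u * c) X) = Cscale c X.
Proof.
  intros Hu. destruct X as [a b]. unfold omega, Cmul, Defs.RtoC, Cscale; simpl.
  f_equal; field; lra.
Qed.

Lemma omega_last_identity (P A : Cx) (u R1 : R) :
  0 < u < 1 -> Cmod P <= 1 -> A = Cadd P (Cscale u (Cmul P (Cadd A C0))) ->
  Cmul (Cscale R1 (Cdiv P (Csub C1 (Cscale u P)))) C1 = Cscale R1 A.
Proof.
  intros Hu HP H. assert (Hn := one_minus_nonzero P u ltac:(lra) HP).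
  rewrite (solve_recursion P P A C0 u ltac:(lra) HP H). to_Coquelicot.
  field. exact Hn.
Qed.

Lemma omega_letter_identity (P A G : Cx) (u R1 R2 R3 : R) :
  0 < u < 1 -> Cmod P <= 1 -> R1 * R2 = u * R3 ->
  A = Cadd C0 (Cscale u (Cmul P (Cadd A G))) ->
  Cmul (Cscale R1 (Cdiv P (Csub C1 (Cscale u P)))) (Cscale R2 G) = Cscale R3 A.
Proof.
  intros Hu HP HR H. assert (Hn := one_minus_nonzero P u ltac:(lra) HP).
  rewrite (solve_recursion P C0 A G u ltac:(lra) HP H). to_Coquelicot.
  assert (HR' : Complex.Cmult (Complex.RtoC R1) (Complex.RtoC R2) =
                Complex.Cmult (Complex.RtoC u) (Complex.RtoC R3))
    by (rewrite <- !RtoC_mult, HR; reflexivity).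
  set (Q := Complex.Cdiv (Complex.Cmult P G)
              (Complex.Cminus (Complex.RtoC 1) (Complex.Cmult (Complex.RtoC u) P))).
  transitivity (Complex.Cmult (Complex.Cmult (Complex.RtoC R1) (Complex.RtoC R2)) Q);
    unfold Q; [field; exact Hn|].
  rewrite HR'. field. exact Hn.
Qed.

Lemma tbar_lt (r : nat) (t : nat -> R) (k : nat) : (k < r)%nat -> tbar r t k = t k - t (S k).
Proof. intros H. unfold tbar. apply Nat.ltb_lt in H. rewrite H. reflexivity. Qed.

Lemma tbar_last (r : nat) (t : nat -> R) : tbar r t r = t r.
Proof. unfold tbar. rewrite Nat.ltb_irrefl. reflexivity. Qed.

Section IteratedIntegrals.
Variables (r : nat) (s : nat -> nat) (xi : nat -> Cx) (t : nat -> R).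
Hypothesis HE : condE r xi t.
Hypothesis Hs : forall i, (1 <= i <= r)%nat -> (1 <= s i)%nat.

Lemma x0_integral (k j : nat) (z : R) : (1 <= k <= r)%nat -> 0 < z < 1 ->
  CImpInt (fun u => Cmul (omega x0 u) (gen r s xi t k (S j) u)) z (gen r s xi t k (S (S j)) z).
Proof.
  intros Hk Hz. destruct (HE k Hk) as [_ Ht].
  rewrite gen_succ by exact Ht.
  apply (CImpInt_inner (t k) _ _ z Ht (coef_poly_bounded r s xi t HE Hs k (S j) Hk));
    [|exact Hz].
  intros u Hu. unfold gen. rewrite Rpower_one_minus by lra. apply omega_x0_identity; lra.
Qed.

Lemma x0_integral_at_1 (k j : nat) : (1 <= k <= r)%nat ->
  CImpInt (fun u => Cmul (omega x0 u) (gen r s xi t k (S j) u)) 1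
          (CSeries (coef r s xi t k (S (S j)))).
Proof.
  intros Hk. destruct (HE k Hk) as [_ Ht].
  rewrite (CSeries_ext _ _ (fun n => coef_succ r s xi t k (S j) n Ht)).
  apply (CImpInt_at_1 (t k) _ _ Ht (coef_poly_bounded r s xi t HE Hs k (S j) Hk)).
  - intros u Hu. unfold gen. rewrite Rpower_one_minus by lra. apply omega_x0_identity; lra.
  - apply (ex_series_ext (fun n => Cmod (coef r s xi t k (S (S j)) n)));
      [|apply (coef_summable r s xi t HE Hs k (S (S j)) Hk); lia].
    intros n. rewrite coef_succ by exact Ht. reflexivity.
Qed.

Lemma last_letter_integral (z : R) : (1 <= r)%nat -> 0 < z < 1 ->
  CImpInt (fun u => Cmul (omega (xl r xi (tbar r t r)) u) C1) z (gen r s xi t r 1 z).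
Proof.
  intros Hr Hz. destruct (HE r ltac:(lia)) as [HP Ht].
  rewrite gen_succ by exact Ht.
  apply (CImpInt_inner (t r) _ _ z Ht (coef_poly_bounded r s xi t HE Hs r 0 ltac:(lia)));
    [|exact Hz].
  intros u Hu. unfold omega. rewrite tbar_last.
  apply omega_last_identity; [lra|exact HP|].
  assert (Hzero : poly_bounded (fun _ => C0)) by (exists 0; intros n; rewrite Cmod_C0; lra).
  assert (Hrec := CPS_recursion (Cprod1 xi r) (coef r s xi t r 0) (fun _ => C0) u
                    (coef_poly_bounded r s xi t HE Hs r 0 ltac:(lia)) Hzero ltac:(lra)
                    (coef_top_rec r s xi t)).
  rewrite coef_top_0, CPS_C0 in Hrec. exact Hrec.
Qed.

(** A letter [x_k], [k < r], integrated against [gen (k+1) s_(k+1)] gives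
    [gen k 1]; the exponents combine because [tbar_k = t_k - t_(k+1)]. *)
Lemma letter_integral (k : nat) (z : R) : (1 <= k < r)%nat -> 0 < z < 1 ->
  CImpInt (fun u => Cmul (omega (xl k xi (tbar r t k)) u) (gen r s xi t (S k) (s (S k)) u))
          z (gen r s xi t k 1 z).
Proof.
  intros Hk Hz. destruct (HE k ltac:(lia)) as [HP Ht].
  rewrite gen_succ by exact Ht.
  apply (CImpInt_inner (t k) _ _ z Ht (coef_poly_bounded r s xi t HE Hs k 0 ltac:(lia)));
    [|exact Hz].
  intros u Hu. unfold omega, gen. rewrite tbar_lt by lia.
  apply omega_letter_identity; [lra|exact HP| |].
  - rewrite <- Rpower_plus, <- Rpower_one_minus by lra. f_equal. ring.
  - assert (Hrec := CPS_recursion (Cprod1 xi k) (coef r s xi t k 0)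
                      (coef r s xi t (S k) (s (S k))) u
                      (coef_poly_bounded r s xi t HE Hs k 0 ltac:(lia))
                      (coef_poly_bounded r s xi t HE Hs (S k) _ ltac:(lia)) ltac:(lra)
                      (fun n => coef_low_rec r s xi t k n ltac:(lia))).
    rewrite coef_low_0 in Hrec by lia. exact Hrec.
Qed.

Lemma x0_block (k : nat) : (1 <= k <= r)%nat ->
  forall m w, iter_fun (xl k xi (tbar r t k) :: w) (gen r s xi t k 1) ->
  iter_fun (repeat x0 m ++ xl k xi (tbar r t k) :: w) (gen r s xi t k (S m)).
Proof.
  intros Hk m. induction m as [|m IH]; intros w H; [exact H|].
  exists (gen r s xi t k (S m)). split; [apply IH, H|].
  intros z Hz. apply x0_integral; auto.
Qed.

Lemma tail_word_integral (d : nat) : forall k, (k + d = r)%nat -> (1 <= k)%nat ->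
  iter_fun (xl k xi (tbar r t k) :: word_from r s xi t (S k) d) (gen r s xi t k 1).
Proof.
  induction d as [|d IH]; intros k Hkd Hk1.
  - assert (k = r) by lia. subst k.
    exists (fun _ => C1). split; [simpl; intros; reflexivity|].
    intros z Hz. apply last_letter_integral; auto; lia.
  - simpl word_from. exists (gen r s xi t (S k) (s (S k))). split.
    + replace (s (S k)) with (S (s (S k) - 1)) at 2 by (specialize (Hs (S k)); lia).
      apply x0_block; [lia|]. apply IH; lia.
    + intros z Hz. apply letter_integral; auto; lia.
Qed.

End IteratedIntegrals.

Lemma Csum_lt_components (f : nat -> Cx) (N : nat) :
  Csum_lt f (S (S N)) =
  (sum_f_R0 (fun n => fst (f (S n))) N, sum_f_R0 (fun n => snd (f (S n))) N).
Proof.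
  induction N as [|N IH].
  - simpl. destruct (f 1%nat). unfold Cadd, C0; simpl. f_equal; ring.
  - change (Csum_lt f (S (S (S N)))) with (Cadd (Csum_lt f (S (S N))) (f (S (S N)))).
    rewrite IH. reflexivity.
Qed.

(** The partial sums of the polyzeta are the partial sums of [sum coef 1 s_1]:
    the outermost summation index is [n + 1]. *)
Lemma Di_partial_coef (r : nat) (s : nat -> nat) (xi : nat -> Cx) (t : nat -> R) (N : nat) :
  (1 <= r)%nat ->
  Di_partial r s xi t (S N) =
  (sum_f_R0 (Re_seq (coef r s xi t 1 (s 1%nat))) N,
   sum_f_R0 (Im_seq (coef r s xi t 1 (s 1%nat))) N).
Proof.
  intros Hr. destruct r as [|r']; [lia|].
  unfold Di_partial.
  change (Di_level s xi t (S r') 1 (S (S N))) with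
    (Csum_lt (fun n => Cmul (Di_term s xi t 1 n) (Di_level s xi t r' 2 n)) (S (S N))).
  rewrite Csum_lt_components.
  assert (Hterm : forall n, Cmul (Di_term s xi t 1 (S n)) (Di_level s xi t r' 2 (S n)) =
                            coef (S r') s xi t 1 (s 1%nat) n).
  { intros n. unfold coef, Di_term. simpl Cprod1. rewrite Nat.sub_1_r. simpl Nat.pred.
    replace (Cmul C1 (xi 1%nat)) with (xi 1%nat) by (to_Coquelicot; ring). reflexivity. }
  f_equal; apply sum_eq; intros n _; rewrite Hterm; reflexivity.
Qed.

Lemma Cseq_cv_of_series (u : nat -> Cx) (a b : nat -> R) (L : Cx) :
  (forall N, u (S N) = (sum_f_R0 a N, sum_f_R0 b N)) ->
  infinite_sum a (fst L) -> infinite_sum b (snd L) -> Cseq_cv u L.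
Proof.
  intros Hu H1 H2 eps He.
  destruct (H1 (eps / 2) ltac:(lra)) as [N1 HN1].
  destruct (H2 (eps / 2) ltac:(lra)) as [N2 HN2].
  exists (S (max N1 N2)). intros [|N] HN; [lia|].
  specialize (HN1 N ltac:(lia)). specialize (HN2 N ltac:(lia)). unfold R_dist in *.
  eapply Rle_lt_trans; [apply Cmod_le_Rabs_sum|].
  rewrite Hu. unfold Csub, Cadd, Copp. simpl. unfold Rminus in *. lra.
Qed.

Lemma Di_is_CSeries (r : nat) (s : nat -> nat) (xi : nat -> Cx) (t : nat -> R) :
  condE r xi t -> (forall i, (1 <= i <= r)%nat -> (1 <= s i)%nat) -> (1 <= r)%nat ->
  (1 < s 1%nat)%nat ->
  Di_is r s xi t (CSeries (coef r s xi t 1 (s 1%nat))).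
Proof.
  intros HE Hs Hr Hs1.
  assert (HS := coef_summable r s xi t HE Hs 1 (s 1%nat) ltac:(lia) Hs1).
  set (c := coef r s xi t 1 (s 1%nat)) in *.
  assert (Hsum : forall f : Cx -> R, (forall z, Rabs (f z) <= Cmod z) ->
            infinite_sum (fun n => f (c n)) (Series (fun n => f (c n)))).
  { intros f Hf. apply is_series_Reals, Series_correct, ex_series_Rabs.
    apply (@ex_series_le R_AbsRing R_CompleteNormedModule _ (fun n => Cmod (c n))); [|exact HS].
    intros n. unfold norm; simpl. unfold abs; simpl. rewrite Rabs_Rabsolu. apply Hf. }
  apply (Cseq_cv_of_series _ (Re_seq c) (Im_seq c)).
  - intros N. apply Di_partial_coef, Hr.
  - exact (Hsum fst Rabs_fst_le_Cmod).
  - exact (Hsum snd Rabs_snd_le_Cmod).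
Qed.

Theorem mainTheorem7 (r : nat) (s : nat -> nat) (xi : nat -> Cx) (t : nat -> R) :
  (1 <= r)%nat ->
  (forall i : nat, (1 <= i <= r)%nat -> (1 <= s i)%nat) ->
  (1 < s 1)%nat ->
  condE r xi t ->
  exists L : Cx, Di_is r s xi t L /\ alpha01 (Di_word r s xi t) L.
Proof.
  intros Hr Hs Hs1 HE.
  exists (CSeries (coef r s xi t 1 (s 1%nat))). split; [apply Di_is_CSeries; auto|].
  (* the word is [x0 x0^(s_1-2) x_1 (tail)], with [s_1 = (s_1 - 2) + 2] *)
  destruct r as [|r0]; [lia|]. unfold Di_word. simpl word_from.
  destruct (s 1%nat) as [|[|j]] eqn:Es1; [lia|lia|].
  replace (S (S j) - 1)%nat with (S j) by lia. simpl repeat.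
  exists (gen (S r0) s xi t 1 (S j)). split.
  - apply (x0_block _ s xi t HE Hs 1); [lia|].
    apply tail_word_integral; auto; lia.
  - apply x0_integral_at_1; auto; lia.
Qed.
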